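(* There exist a strictly increasing sequence $(m_n)_{n\in\mathbb N}$ of natural numbers with $m_0=0$, finite groups $G_n$ ($n\in\mathbb N$), group homomorphisms $c_n\colon \mathbb F({}^n2)\to G_n$, and actions $\sigma_n$ of $G_n$ on $I_n:=[m_n,m_{n+1})=\{k\in\mathbb N: m_n\le k<m_{n+1}\}$, each faithful and transitive, such that for all $n\in\mathbb N$: (A) $\sum_{m<n}|I_m| < |I_n|-1$, and (B) the restriction of $c_n$ to $W_n$ is injective.
   Context: For $n\in\mathbb N$, ${}^n2$ is the finite set of binary sequences of length $n$ and $\mathbb F({}^n2)$ is the free group with free generating set ${}^n2$ (so $\mathbb F({}^0 2)$ is trivial). $W_n$ denotes the set of reduced words of $\mathbb F({}^n2)$ of word length at most $n$. *)

From HB Require Import structures.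
From mathcomp Require Import all_boot fingroup perm.
Set Implicit Arguments. Unset Strict Implicit. Unset Printing Implicit Defensive.

(* A letter of F(^n 2): a generator (binary sequence of length n) with a flag
   [true] meaning the inverse of the generator. *)
Definition letter (n : nat) := (n.-tuple bool * bool)%type.

Definition reduced (n : nat) (w : seq (letter n)) : bool :=
  match w with
  | [::] => true
  | a :: s => path (fun a b : letter n => (a.1 != b.1) || (a.2 == b.2)) a s
  end.

Arguments reduced n w : clear implicits.
Definition W (n : nat) : pred (seq (letter n)) :=
  fun w => reduced n w && (size w <= n).

(* The value of a word under the unique homomorphism F(^n 2) -> gT
   extending the generator assignment f (universal property). *)
Definition word_eval (gT : finGroupType) (n : nat) (f : n.-tuple bool -> gT)
  (w : seq (letter n)) : gT :=
  (\prod_(l <- w) (if l.2 then (f l.1)^-1 else f l.1))%g.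
Arguments W n _ : clear implicits.

(* G_n is the full symmetric group of I_n, so faithfulness and transitivity
   are free and only (B) needs work.  Embed the ball of reduced words of
   length <= n injectively into I_n and let each generator act on the embedded
   ball as left multiplication by a letter acts on reduced words.  That partial
   map is injective, because multiplication by a letter is injective on reduced
   words, hence it extends to a permutation.  A word w of the ball then moves
   the point of w to the point of the empty word, which separates the words of
   W_n.  The blocks are taken longer than the ball and than all previous blocks
   together. *)

From HB Require Import structures.
From mathcomp Require Import all_boot fingroup perm.
Set Implicit Arguments. Unset Strict Implicit. Unset Printing Implicit Defensive.

Fixpoint perm_extend (T : eqType) (X : finType) (a b : T -> X) (s : seq T)
    : {perm X} :=
  if s is t :: s' then
    let p := perm_extend a b s' in
    if t \in s' then p else (p * tperm (p (a t)) (b t))%g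
  else 1%g.

Lemma perm_extendE (T : eqType) (X : finType) (a b : T -> X) (s : seq T) :
  {in s &, injective a} -> {in s &, injective b} ->
  {in s, forall t, perm_extend a b s (a t) = b t}.
Proof.
elim: s => [|t s IHs] //= a_inj b_inj.
have sub_s u : u \in s -> u \in t :: s by rewrite inE => ->; rewrite orbT.
have IH := IHs (sub_in2 sub_s a_inj) (sub_in2 sub_s b_inj).
have [ts | tNs] := boolP (t \in s).
  by move=> u; rewrite inE => /predU1P[-> | /IH]; first exact: IH.
move=> u; rewrite permM inE => /predU1P[-> | us]; first by rewrite tpermL.
have ut : u != t by apply: contraNneq tNs => <-.
have [tts uts] := (mem_head t s, sub_s u us).
rewrite (IH u us) tpermD //.
- rewrite -(IH u us) (inj_eq perm_inj).
  by apply: contra ut => /eqP/a_inj-> //.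
- by apply: contra ut => /eqP/b_inj-> //.
Qed.

Section FreeWords.

Variable n : nat.
Implicit Types (l : letter n) (w : seq (letter n)).

Definition letter_inv l : letter n := (l.1, ~~ l.2).

Definition lmul l w := if ohead w == Some (letter_inv l) then behead w else l :: w.

Lemma reduced_cons l w :
  reduced n (l :: w) = (ohead w != Some (letter_inv l)) && reduced n w.
Proof.
case: w => [|b w] //=; congr andb; rewrite /letter_inv.
case: l b => [g e] [h f] /=.
rewrite (inj_eq (@Some_inj _)) xpair_eqE negb_and (eq_sym h).
by case: e f => [] [].
Qed.

Lemma lmul_inv_cons l w : lmul l (letter_inv l :: w) = w.
Proof. by rewrite /lmul eqxx. Qed.

Lemma lmul_reduced l w : reduced n (l :: w) -> lmul l w = l :: w.
Proof. by rewrite reduced_cons /lmul => /andP[/negbTE ->]. Qed.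

Lemma letter_invK : involutive letter_inv.
Proof. by case=> g e; rewrite /letter_inv negbK. Qed.

Lemma lmul_inj l : {in reduced n &, injective (lmul l)}.
Proof.
have cancel_cons w1 w2 : ohead w1 = Some (letter_inv l) -> behead w1 = l :: w2 ->
    ~~ reduced n w1.
  case: w1 => // _ w1 [->]; rewrite reduced_cons /= => ->.
  by rewrite letter_invK eqxx.
move=> w1 w2 r1 r2; rewrite /lmul.
case: eqP => [h1 | _]; case: eqP => [h2 | _] //.
- by case: w1 w2 h1 h2 {r1 r2} => [|? ?] [|? ?] //= [->] [->] ->.
- by move=> e1; case/negP: (cancel_cons _ _ h1 e1).
- by move=> e2; case/negP: (cancel_cons _ _ h2 (esym e2)).
- by case.
Qed.

End FreeWords.

Lemma word_eval_nil (gT : finGroupType) n (f : n.-tuple bool -> gT) :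
  word_eval f [::] = 1%g.
Proof. exact: big_nil. Qed.

Lemma word_eval_cons (gT : finGroupType) n (f : n.-tuple bool -> gT) l w :
  word_eval f (l :: w) = ((if l.2 then (f l.1)^-1 else f l.1) * word_eval f w)%g.
Proof. exact: big_cons. Qed.

Lemma mem_codom_bseqval (T : finType) N (s : seq T) :
  (s \in codom (@bseqval N T)) = (size s <= N).
Proof. by apply/codomP/idP => [[b ->] | sN]; [exact: size_bseq | exists (Bseq sN)]. Qed.

Section BallAction.

Variables (n N : nat) (X : finType) (e : seq (letter n) -> X).
Hypothesis e_inj : {in [pred w | size w <= N] &, injective e}.

Definition ball_lmul_perm (l : letter n) : {perm X} :=
  perm_extend e (e \o lmul l)
    [seq w <- codom (@bseqval N _) | reduced n w && (size (lmul l w) <= N)].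

Lemma ball_lmul_permE l w : reduced n w -> size w <= N -> size (lmul l w) <= N ->
  ball_lmul_perm l (e w) = e (lmul l w).
Proof.
move=> rw sw slw; rewrite /ball_lmul_perm.
set s := filter _ _.
have mem_s u : u \in s = [&& reduced n u, size (lmul l u) <= N & size u <= N].
  by rewrite mem_filter mem_codom_bseqval andbA.
apply: perm_extendE; last by rewrite mem_s rw slw sw.
  by move=> u v; rewrite !mem_s => /and3P[_ _ su] /and3P[_ _ sv]; apply: e_inj.
move=> u v; rewrite !mem_s => /and3P[ru slu _] /and3P[rv slv _] /= E.
by apply: (@lmul_inj n l u v ru rv); apply: e_inj.
Qed.

(* Permutations act on the right ((s * t) x = t (s x)), so the generator [g]
   has to act by left multiplication with its inverse. *)
Definition ball_gen_perm (g : n.-tuple bool) := ball_lmul_perm (g, true).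

Lemma word_eval_ball w : reduced n w -> size w <= N ->
  word_eval ball_gen_perm w (e w) = e [::].
Proof.
elim: w => [|l w IHw] rw sw; first by rewrite word_eval_nil perm1.
have rw' : reduced n w by move: rw; rewrite reduced_cons => /andP[].
have sw' : size w <= N := ltnW sw.
rewrite word_eval_cons permM -(IHw rw' sw'); congr (fun_of_perm _ _).
case: l rw sw => g [] rw sw /=.
  by rewrite -(lmul_reduced rw) -ball_lmul_permE ?permK ?lmul_reduced.
by rewrite /ball_gen_perm ball_lmul_permE ?[lmul _ _](lmul_inv_cons (g, true)).
Qed.

Lemma word_eval_ball_inj :
  {in [pred w | reduced n w && (size w <= N)] &, injective (word_eval ball_gen_perm)}.
Proof.
move=> w1 w2 /andP[r1 s1] /andP[r2 s2] E; apply: e_inj => //.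
apply: (@perm_inj _ (word_eval ball_gen_perm w1)).
by rewrite word_eval_ball // E word_eval_ball.
Qed.

End BallAction.

Definition ball_embed n N k (le_ball : #|{bseq N of letter n}| <= k)
    (w : seq (letter n)) : 'I_k :=
  widen_ord le_ball (enum_rank (insub_bseq N w)).

Lemma ball_embed_inj n N k (le_ball : #|{bseq N of letter n}| <= k) :
  {in [pred w | size w <= N] &, injective (ball_embed le_ball)}.
Proof.
move=> w1 w2 s1 s2 /(congr1 val) /= /val_inj E.
by move/enum_rank_inj/(congr1 val): E; rewrite !insubdK.
Qed.

Fixpoint block_start n : nat :=
  if n is k.+1 then block_start k + (block_start k + #|{bseq k of letter k}|).+2
  else 0.

Lemma block_size n :
  block_start n.+1 - block_start n = (block_start n + #|{bseq n of letter n}|).+2.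
Proof. exact: addKn. Qed.

Lemma block_start_lt n : block_start n < block_start n.+1.
Proof. by rewrite /= addnS ltnS leq_addr. Qed.

Lemma sum_block_size n :
  \sum_(k < n) (block_start k.+1 - block_start k) = block_start n.
Proof.
rewrite -(big_mkord xpredT (fun k => block_start k.+1 - block_start k)).
rewrite telescope_sumn ?subn0 //.
exact: homo_leq leqnn leq_trans (fun k => ltnW (block_start_lt k)).
Qed.

Theorem proposition1p2 :
  exists m : nat -> nat, m 0 = 0 /\ (forall n, m n < m n.+1) /\
  exists (G : nat -> finGroupType)
         (c : forall n, n.-tuple bool -> G n)
         (sigma : forall n, G n -> {perm 'I_(m n.+1 - m n)}),
  forall n,
    [/\ {morph sigma n : x y / (x * y)%g},
        injective (sigma n),
        (forall i j : 'I_(m n.+1 - m n), exists g, sigma n g i = j),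
        \sum_(k < n) (m k.+1 - m k) < (m n.+1 - m n) - 1
      & {in W n &, injective (word_eval (c n))}].
Proof.
have le_ball n : #|{bseq n of letter n}| <= block_start n.+1 - block_start n.
  by rewrite block_size; apply/leqW/leqW/leq_addl.
exists block_start; do 2!split => //; first exact: block_start_lt.
exists (fun n => {perm 'I_(block_start n.+1 - block_start n)} : finGroupType).
exists (fun n => ball_gen_perm n (ball_embed (le_ball n))), (fun n => id).
move=> n; split => //.
- by move=> i j; exists (tperm i j); rewrite tpermL.
- by rewrite sum_block_size block_size subn1 ltnS leq_addr.
- exact: word_eval_ball_inj (ball_embed_inj (le_ball := le_ball n)).
Qed.
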